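(* For every non-integer rational number $d>1$, there exist a deterministic discounted-sum automaton $\mathcal{A}$ with discount factor $d$ and a rational number $r$ such that the cut-point language $L^{\ge r}=\{w\in L(\mathcal{A}) : wt_{\mathcal{A}}(w)\ge r\}$ is not $\omega$-regular.
   Context: For a sequence $A$ and discount factor $d>1$, $\mathrm{DS}(A,d)=\sum_{i\ge0}A[i]/d^i$. A discounted-sum automaton is a weighted $\omega$-automaton $(\mathcal{M},\gamma,\mathrm{DS}(\cdot,d))$ where $\mathcal{M}$ is a B\''uchi automaton all of whose states are accepting and $\gamma$ assigns rational weights to transitions; a run's weight is the discounted sum of its weight sequence, and $wt_{\mathcal{A}}(w)$ is the supremum of the weights of runs on $w$. It is deterministic if $\mathcal{M}$ has one initial state and at most one successor per state and letter. *)

From Stdlib Require Import Reals QArith Qreals FinFun.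
Set Implicit Arguments.

Definition word (Sigma : Type) := nat -> Sigma.

Definition is_DS (A : nat -> Q) (d : Q) (l : R) : Prop :=
  infinite_sum (fun i => (Q2R (A i) / (Q2R d) ^ i)%R) l.

(* Deterministic discounted-sum automaton (all states accepting):
   finite state set, one initial state, and for each state and letter at most one
   transition, carrying a rational weight. *)
Record DDSA (Sigma : Type) := {
  dstate : Type;
  dstate_fin : Finite dstate;
  dinit : dstate;
  dtrans : dstate -> Sigma -> option (dstate * Q)
}.

Definition drun (Sigma : Type) (A : DDSA Sigma) (w : word Sigma)
  (rho : nat -> dstate A) (g : nat -> Q) : Prop :=
  rho 0%nat = dinit A /\
  forall i, dtrans A (rho i) (w i) = Some (rho (S i), g i).

Definition dlang (Sigma : Type) (A : DDSA Sigma) (w : word Sigma) : Prop :=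
  exists rho g, drun A w rho g.

(* wt_A(w) >= r; since A is deterministic the run is unique, so the supremum
   over runs is the discounted sum of that run. *)
Definition cut_lang (Sigma : Type) (A : DDSA Sigma) (d r : Q) (w : word Sigma) : Prop :=
  exists rho g, drun A w rho g /\
    exists l, is_DS g d l /\ (l >= Q2R r)%R.

Definition buchi_accepts (Sigma Qs : Type) (init : Qs -> Prop)
  (delta : Qs -> Sigma -> Qs -> Prop) (acc : Qs -> Prop) (w : word Sigma) : Prop :=
  exists rho : nat -> Qs,
    init (rho 0%nat) /\ (forall i, delta (rho i) (w i) (rho (S i))) /\
    (forall N, exists i, (N <= i)%nat /\ acc (rho i)).

Definition omega_regular (Sigma : Type) (L : word Sigma -> Prop) : Prop :=
  exists (Qs : Type) (init : Qs -> Prop) (delta : Qs -> Sigma -> Qs -> Prop)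
         (acc : Qs -> Prop),
    Finite Qs /\ forall w, L w <-> buchi_accepts init delta acc w.

From Stdlib Require Import Reals QArith Qreals FinFun.
From Stdlib Require Import ZArith Qround Znumtheory List Lia Lra Classical FunctionalExtensionality.
From Stdlib Require Qcanon.
Import Fin2Restrict.

(* Write the non-integer rational d as p/q in lowest terms, so q > 1,
   and let s = 1/q.  The greedy base-d expansion of s has digits in {0,..,floor d};
   its sequence of remainders r_0 = s, r_(n+1) = d (r_n - floor r_n) stays in [0,d)
   and the remainders are pairwise distinct, because r_n has exact denominator
   q^(n+1).  Take the one-state deterministic automaton over the digit alphabet
   whose weight is the digit itself, and the cut-point r = s.  The greedy word w of s
   has value exactly s, so w is in the cut-point language.  If a Buchi automaton
   accepted this language, its run on w would visit the same state at two positions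
   a < b; deleting the factor w[a,b) and pumping it once more both give accepted
   words.  Comparing their values with s yields r_b >= r_a and r_a >= r_b, so two
   remainders coincide: a contradiction.
   The file develops, in order: pigeonhole and run surgery for Buchi automata;
   prefix/tail decomposition of discounted sums; the greedy expansion; the
   distinctness of remainders of 1/q; the digit automaton; and finally theorem6. *)

Lemma finite_repeat (X : Type) (f : nat -> X) :
  Finite X -> exists j k, (j < k)%nat /\ f j = f k.
Proof.
  intros [l Hl]. apply NNPP; intro Hno.
  assert (Hnd : NoDup (map f (seq 0 (S (length l))))).
  { apply Injective_map_NoDup_in; [|apply seq_NoDup]. intros x y _ _ E.
    destruct (Nat.lt_total x y) as [h|[h|h]]; auto; exfalso; apply Hno.
    - exists x, y; auto.
    - exists y, x; auto. }
  apply NoDup_incl_length with (l' := l) in Hnd.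
  - rewrite length_map, length_seq in Hnd; lia.
  - intros x _; apply Hl.
Qed.

(* [splice w a b] follows [w] below position [a], then continues as [w] from
   position [b]: for b > a a factor is deleted, for b < a one is repeated. *)
Definition splice {X : Type} (w : nat -> X) (a b : nat) (i : nat) : X :=
  if (i <? a)%nat then w i else w (i - a + b)%nat.

Lemma splice_map (X Y : Type) (f : X -> Y) (w : nat -> X) (a b : nat) :
  (fun i => f (splice w a b i)) = splice (fun i => f (w i)) a b.
Proof.
  apply functional_extensionality; intro i. unfold splice.
  now destruct (i <? a)%nat.
Qed.

Lemma buchi_accepts_splice (Sg Qs : Type) (init : Qs -> Prop)
  (delta : Qs -> Sg -> Qs -> Prop) (acc : Qs -> Prop) (w : word Sg)
  (rho : nat -> Qs) (a b : nat) :
  rho a = rho b ->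
  init (rho 0%nat) -> (forall i, delta (rho i) (w i) (rho (S i))) ->
  (forall N, exists i, (N <= i)%nat /\ acc (rho i)) ->
  buchi_accepts init delta acc (splice w a b).
Proof.
  intros Hab Hinit Hdelta Hacc. exists (splice rho a b). unfold splice.
  split; [|split].
  - destruct (Nat.ltb_spec 0 a); [exact Hinit|].
    replace (0 - a + b)%nat with b by lia. rewrite <- Hab.
    now replace a with 0%nat by lia.
  - intro i. destruct (Nat.ltb_spec i a); destruct (Nat.ltb_spec (S i) a).
    + apply Hdelta.
    + replace (S i - a + b)%nat with b by lia. rewrite <- Hab.
      replace a with (S i) by lia. apply Hdelta.
    + lia.
    + replace (S i - a + b)%nat with (S (i - a + b)) by lia. apply Hdelta.
  - intro N. destruct (Hacc (N + a + b)%nat) as [i [Hi Hai]].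
    exists (i + a - b)%nat. split; [lia|].
    destruct (Nat.ltb_spec (i + a - b) a); [lia|].
    now replace (i + a - b - a + b)%nat with i by lia.
Qed.

Open Scope Q_scope.

Lemma Q2R_0 : Q2R 0 = 0%R.
Proof. unfold Q2R; simpl; lra. Qed.

Lemma Q2R_inject_Z (z : Z) : Q2R (inject_Z z) = IZR z.
Proof. unfold Q2R; simpl; field. Qed.

Lemma Q2R_gt_1 (d : Q) : 1 < d -> (1 < Q2R d)%R.
Proof. intro Hd. apply Qlt_Rlt in Hd. now rewrite RMicromega.Q2R_1 in Hd. Qed.

Definition ds_term (g : nat -> Q) (d : Q) (i : nat) : R := (Q2R (g i) / Q2R d ^ i)%R.

Lemma ds_partial_split (g h : nat -> Q) (d : Q) (m : nat) :
  Q2R d <> 0%R -> (forall i, g (S m + i)%nat = h i) -> forall n,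
  sum_f_R0 (ds_term g d) (S m + n) =
  (sum_f_R0 (ds_term g d) m + / Q2R d ^ (S m) * sum_f_R0 (ds_term h d) n)%R.
Proof.
  intros Hd0 Hgh n. induction n as [|n IH].
  - rewrite Nat.add_0_r. simpl sum_f_R0. unfold ds_term.
    rewrite <- (Hgh 0%nat), Nat.add_0_r. simpl pow. field.
    split; auto. apply pow_nonzero; auto.
  - rewrite Nat.add_succ_r, tech5, IH, tech5. unfold ds_term.
    rewrite <- (Hgh (S n)), <- Nat.add_succ_r, pow_add. field.
    split; apply pow_nonzero; auto.
Qed.

Lemma ds_tail (g h : nat -> Q) (d : Q) (m : nat) (t : R) :
  1 < d -> (forall i, g (S m + i)%nat = h i) -> infinite_sum (ds_term h d) t ->
  infinite_sum (ds_term g d) (sum_f_R0 (ds_term g d) m + t / Q2R d ^ (S m))%R.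
Proof.
  intros Hd Hgh Ht eps Heps. apply Q2R_gt_1 in Hd.
  assert (Hp : (0 < Q2R d ^ S m)%R) by (apply pow_lt; lra).
  destruct (Ht (eps * Q2R d ^ S m)%R) as [N HN]; [nra|].
  exists (S m + N)%nat. intros n Hn.
  replace n with (S m + (n - S m))%nat by lia.
  rewrite (ds_partial_split g h d m) by (auto; lra).
  specialize (HN (n - S m)%nat ltac:(lia)). unfold R_dist in *.
  replace (sum_f_R0 (ds_term g d) m + / Q2R d ^ S m * sum_f_R0 (ds_term h d) (n - S m) -
     (sum_f_R0 (ds_term g d) m + t / Q2R d ^ S m))%R
  with (/ Q2R d ^ S m * (sum_f_R0 (ds_term h d) (n - S m) - t))%R by (field; lra).
  rewrite Rabs_mult, Rabs_right by (left; apply Rinv_0_lt_compat; lra).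
  apply Rmult_lt_reg_l with (Q2R d ^ S m)%R; auto.
  rewrite <- Rmult_assoc, Rinv_r by lra. lra.
Qed.

Lemma ds_compare_tails (g h g' h' : nat -> Q) (d : Q) (m : nat) (lg lh tg th : R) :
  1 < d -> (forall i, (i <= m)%nat -> g i = h i) ->
  (forall i, g (S m + i)%nat = g' i) -> (forall i, h (S m + i)%nat = h' i) ->
  infinite_sum (ds_term g d) lg -> infinite_sum (ds_term h d) lh ->
  infinite_sum (ds_term g' d) tg -> infinite_sum (ds_term h' d) th ->
  (lh <= lg)%R -> (th <= tg)%R.
Proof.
  intros Hd Hpre Hg Hh Hlg Hlh Htg Hth Hle.
  assert (Hp : (0 < Q2R d ^ S m)%R) by (apply pow_lt; apply Q2R_gt_1 in Hd; lra).
  rewrite (uniqueness_sum _ _ _ Hlg (ds_tail _ _ _ _ _ Hd Hg Htg)) in Hle.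
  rewrite (uniqueness_sum _ _ _ Hlh (ds_tail _ _ _ _ _ Hd Hh Hth)) in Hle.
  assert (Hsum : sum_f_R0 (ds_term h d) m = sum_f_R0 (ds_term g d) m).
  { apply sum_eq; intros i Hi. unfold ds_term. now rewrite Hpre. }
  rewrite Hsum in Hle. apply Rmult_le_reg_r with (/ Q2R d ^ S m)%R.
  - now apply Rinv_0_lt_compat.
  - unfold Rdiv in Hle. lra.
Qed.

Fixpoint greedy_rem (d s : Q) (n : nat) : Q :=
  match n with
  | O => s
  | S n => d * (greedy_rem d s n - inject_Z (Qfloor (greedy_rem d s n)))
  end.

Definition greedy_digit (d s : Q) (n : nat) : Q := inject_Z (Qfloor (greedy_rem d s n)).

Lemma greedy_rem_add (d s : Q) (a b : nat) :
  greedy_rem d s (a + b)%nat = greedy_rem d (greedy_rem d s a) b.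
Proof.
  induction b as [|b IH]; simpl; [now rewrite Nat.add_0_r|].
  rewrite Nat.add_succ_r; simpl. now rewrite IH.
Qed.

Lemma greedy_rem_range (d s : Q) :
  1 < d -> 0 <= s < d -> forall n, 0 <= greedy_rem d s n < d.
Proof.
  intros Hd Hs n; induction n as [|n IH]; simpl; [exact Hs|].
  set (x := greedy_rem d s n) in *.
  assert (Hfl := Qfloor_le x). assert (Hfu := Qlt_floor x).
  apply Qle_Rle in Hfl. apply Qlt_Rlt in Hfu. apply Qlt_Rlt in Hd.
  rewrite inject_Z_plus, Q2R_plus, !Q2R_inject_Z in Hfu.
  rewrite Q2R_inject_Z in Hfl. rewrite RMicromega.Q2R_1 in Hd.
  destruct IH as [H0 _]. apply Qle_Rle in H0. rewrite Q2R_0 in H0.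
  split; [apply Rle_Qle | apply Rlt_Qlt];
    rewrite Q2R_mult, Q2R_minus, Q2R_inject_Z; rewrite ?Q2R_0; nra.
Qed.

Lemma greedy_partial_sum (d s : Q) : 1 < d -> forall n,
  sum_f_R0 (ds_term (greedy_digit d s) d) n =
  (Q2R s - Q2R (greedy_rem d s (S n)) / Q2R d ^ (S n))%R.
Proof.
  intros Hd. apply Q2R_gt_1 in Hd.
  induction n as [|n IH].
  - simpl. unfold ds_term, greedy_digit. simpl. rewrite Q2R_mult, Q2R_minus. field. lra.
  - rewrite tech5, IH. unfold ds_term, greedy_digit.
    change (greedy_rem d s (S (S n))) with
      (d * (greedy_rem d s (S n) - inject_Z (Qfloor (greedy_rem d s (S n))))).
    rewrite Q2R_mult, Q2R_minus. simpl pow. field.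
    split; [apply pow_nonzero|]; lra.
Qed.

Lemma greedy_expansion_sum (d s : Q) :
  1 < d -> 0 <= s < d -> infinite_sum (ds_term (greedy_digit d s) d) (Q2R s).
Proof.
  intros Hd Hs eps Heps. assert (Hd' := Q2R_gt_1 d Hd).
  destruct (pow_lt_1_zero (/ Q2R d)) with (y := eps) as [N HN]; auto.
  { rewrite Rabs_right by (left; apply Rinv_0_lt_compat; lra).
    rewrite <- Rinv_1. apply Rinv_lt_contravar; lra. }
  exists N; intros n Hn. unfold R_dist. rewrite greedy_partial_sum by auto.
  specialize (HN n Hn). rewrite pow_inv in HN.
  assert (Hp : (0 < Q2R d ^ n)%R) by (apply pow_lt; lra).
  rewrite Rabs_right in HN by (left; apply Rinv_0_lt_compat; lra).
  destruct (greedy_rem_range d s Hd Hs (S n)) as [G0 Gd].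
  apply Qle_Rle in G0; apply Qlt_Rlt in Gd. rewrite Q2R_0 in G0.
  set (x := Q2R (greedy_rem d s (S n))) in *.
  replace (Q2R s - x / Q2R d ^ S n - Q2R s)%R with (- (x / (Q2R d * Q2R d ^ n)))%R
    by (simpl; ring).
  rewrite Rabs_Ropp, Rabs_right.
  - apply Rle_lt_trans with (/ Q2R d ^ n)%R; auto.
    unfold Rdiv. rewrite Rinv_mult, <- Rmult_assoc.
    rewrite <- (Rmult_1_l (/ Q2R d ^ n)) at 2.
    apply Rmult_le_compat_r; [left; apply Rinv_0_lt_compat; lra|].
    apply Rmult_le_reg_r with (Q2R d); [lra|].
    rewrite Rmult_assoc, Rinv_l by lra. lra.
  - apply Rle_ge, Rmult_le_pos; [lra|]. left; apply Rinv_0_lt_compat; nra.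
Qed.

Lemma greedy_splice_rem_le (d s : Q) (m b : nat) (l : R) :
  1 < d -> 0 <= s < d ->
  infinite_sum (ds_term (splice (greedy_digit d s) (S m) b) d) l -> (Q2R s <= l)%R ->
  (Q2R (greedy_rem d s (S m)) <= Q2R (greedy_rem d s b))%R.
Proof.
  intros Hd Hs Hl Hle.
  assert (Hexp : forall a, infinite_sum (ds_term (greedy_digit d (greedy_rem d s a)) d)
                                        (Q2R (greedy_rem d s a)))
    by (intro a; now apply greedy_expansion_sum, greedy_rem_range).
  assert (Htail : forall a i, greedy_digit d s (a + i) = greedy_digit d (greedy_rem d s a) i)
    by (intros; unfold greedy_digit; now rewrite greedy_rem_add).
  apply (ds_compare_tails (splice (greedy_digit d s) (S m) b) (greedy_digit d s)
           (greedy_digit d (greedy_rem d s b)) (greedy_digit d (greedy_rem d s (S m)))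
           d m l (Q2R s) _ _ Hd);
    [| | apply Htail | exact Hl | exact (greedy_expansion_sum d s Hd Hs)
     | apply Hexp | apply Hexp | exact Hle].
  - intros i Hi. unfold splice. destruct (Nat.ltb_spec i (S m)); [reflexivity|lia].
  - intro i. unfold splice. destruct (Nat.ltb_spec (S m + i) (S m)); [lia|].
    replace (S m + i - S m + b)%nat with (b + i)%nat by lia. apply Htail.
Qed.

Lemma noninteger_lowest_terms (d : Q) : (forall z : Z, ~ d == inject_Z z) ->
  exists (p : Z) (q : positive),
    d * inject_Z (Zpos q) == inject_Z p /\ rel_prime (Zpos q) p /\ ~ (Zpos q | 1)%Z.
Proof.
  intro Hnz. exists (Qnum (Qred d)), (Qden (Qred d)).
  assert (Hdq : d * inject_Z (Zpos (Qden (Qred d))) == inject_Z (Qnum (Qred d))).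
  { rewrite <- (Qred_correct d) at 1. destruct (Qred d) as [n k].
    unfold Qeq; simpl; lia. }
  split; [exact Hdq|split].
  - apply rel_prime_sym, Zgcd_1_rel_prime, (proj1 (Qcanon.Qred_iff _)).
    apply Qcanon.Qred_involutive.
  - intro Hdiv. apply Z.divide_1_r in Hdiv as [Hone|Hneg]; [|lia].
    apply (Hnz (Qnum (Qred d))). rewrite <- Hdq, Hone. symmetry; apply Qmult_1_r.
Qed.

Section UnitFractionRemainders.

Variables (d s : Q) (p q : Z).
Hypotheses (Hdq : d * inject_Z q == inject_Z p) (Hcop : rel_prime q p)
  (Hs : s * inject_Z q == 1) (Hq : ~ (q | 1)%Z).

Lemma greedy_rem_numerator (k : nat) : exists n : Z,
  ~ (q | n)%Z /\ greedy_rem d s k * inject_Z (q ^ Z.of_nat (S k)) == inject_Z n.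
Proof.
  induction k as [|k [n [Hn Hk]]].
  - exists 1%Z. split; [exact Hq|]. simpl. rewrite Z.pow_pos_fold, Z.pow_1_r. exact Hs.
  - set (x := greedy_rem d s k) in *. set (fl := Qfloor x).
    assert (Hpow : (q ^ Z.of_nat (S (S k)) = q * q ^ Z.of_nat (S k))%Z)
      by (rewrite (Nat2Z.inj_succ (S k)); apply Z.pow_succ_r; lia).
    assert (Hqdvd : (q | fl * q ^ Z.of_nat (S k))%Z).
    { apply Z.divide_mul_r. rewrite Nat2Z.inj_succ, Z.pow_succ_r by lia.
      apply Z.divide_mul_l, Z.divide_refl. }
    exists (p * (n - fl * q ^ Z.of_nat (S k)))%Z. split.
    + intro Hdiv. apply Gauss in Hdiv; [|exact Hcop]. apply Hn.
      destruct Hdiv as [c Hc], Hqdvd as [c' Hc']. exists (c + c')%Z. lia.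
    + change (greedy_rem d s (S k)) with (d * (x - inject_Z fl)).
      rewrite Hpow, inject_Z_mult.
      setoid_replace (d * (x - inject_Z fl) * (inject_Z q * inject_Z (q ^ Z.of_nat (S k))))
        with ((d * inject_Z q) * (x * inject_Z (q ^ Z.of_nat (S k))
              - inject_Z fl * inject_Z (q ^ Z.of_nat (S k)))) by ring.
      unfold Z.sub. rewrite Hdq, Hk, inject_Z_mult, inject_Z_plus, inject_Z_opp,
        inject_Z_mult.
      ring.
Qed.

Lemma greedy_rem_injective (j k : nat) :
  (j < k)%nat -> ~ greedy_rem d s j == greedy_rem d s k.
Proof.
  intros Hjk Heq.
  destruct (greedy_rem_numerator j) as [nj [_ Hj]].
  destruct (greedy_rem_numerator k) as [nk [Hnk Hk]].
  assert (Hpow : (q ^ Z.of_nat (S k) = q ^ Z.of_nat (S j) * q ^ Z.of_nat (k - j))%Z)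
    by (rewrite <- Z.pow_add_r by lia; f_equal; lia).
  rewrite Hpow, inject_Z_mult, Qmult_assoc, <- Heq, Hj, <- inject_Z_mult in Hk.
  apply (proj1 (inject_Z_injective _ _)) in Hk. apply Hnk. rewrite <- Hk.
  apply Z.divide_mul_r. replace (Z.of_nat (k - j)) with (Z.succ (Z.of_nat (k - j - 1))) by lia.
  rewrite Z.pow_succ_r by lia. apply Z.divide_mul_l, Z.divide_refl.
Qed.

End UnitFractionRemainders.

Definition digit_weight {M : nat} (x : Fin.t M) : Q := inject_Z (Z.of_nat (f2n x)).

Lemma unit_finite : Finite unit.
Proof. exists (tt :: nil). intros []; now left. Qed.

Definition digit_dsa (M : nat) : DDSA (Fin.t M) :=
  {| dstate := unit; dstate_fin := unit_finite; dinit := tt;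
     dtrans := fun _ x => Some (tt, digit_weight x) |}.

Lemma digit_dsa_cut (M : nat) (d r : Q) (v : word (Fin.t M)) :
  cut_lang (digit_dsa M) d r v <->
  exists l, infinite_sum (ds_term (fun i => digit_weight (v i)) d) l /\ (Q2R r <= l)%R.
Proof.
  split.
  - intros [rho [g [[_ Hrun] [l [Hl Hge]]]]]. exists l. split; [|lra].
    replace (fun i => digit_weight (v i)) with g; [exact Hl|].
    apply functional_extensionality; intro i. specialize (Hrun i).
    simpl in Hrun. now injection Hrun.
  - intros [l [Hl Hge]]. exists (fun _ => tt), (fun i => digit_weight (v i)).
    split; [now split|]. exists l. split; [exact Hl|lra].
Qed.

Lemma greedy_word_exists (d s : Q) : 1 < d -> 0 <= s < d ->
  exists (M : nat) (w : word (Fin.t M)), forall i, digit_weight (w i) = greedy_digit d s i.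
Proof.
  intros Hd Hs. exists (S (Z.to_nat (Qfloor d))).
  assert (Hnn : forall i, (0 <= Qfloor (greedy_rem d s i))%Z)
    by (intro i; apply (Qfloor_resp_le 0), (greedy_rem_range d s Hd Hs)).
  assert (Hlt : forall i, (Z.to_nat (Qfloor (greedy_rem d s i)) < S (Z.to_nat (Qfloor d)))%nat).
  { intro i. destruct (greedy_rem_range d s Hd Hs i) as [_ Hi].
    apply Qlt_le_weak, Qfloor_resp_le in Hi. specialize (Hnn i). lia. }
  exists (fun i => n2f (Hlt i)). intro i.
  unfold digit_weight, greedy_digit. now rewrite f2n_n2f, Z2Nat.id by apply Hnn.
Qed.

Lemma digit_dsa_greedy (M : nat) (w : word (Fin.t M)) (d s : Q) :
  1 < d -> 0 <= s < d -> (forall i, digit_weight (w i) = greedy_digit d s i) ->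
  cut_lang (digit_dsa M) d s w /\
  forall m b, cut_lang (digit_dsa M) d s (splice w (S m) b) ->
    (Q2R (greedy_rem d s (S m)) <= Q2R (greedy_rem d s b))%R.
Proof.
  intros Hd Hs Hw.
  assert (Hdig : (fun i => digit_weight (w i)) = greedy_digit d s)
    by (apply functional_extensionality; exact Hw).
  split.
  - apply digit_dsa_cut. exists (Q2R s). rewrite Hdig.
    split; [now apply greedy_expansion_sum | lra].
  - intros m b Hcut. apply digit_dsa_cut in Hcut as [l [Hl Hge]].
    rewrite splice_map, Hdig in Hl. now apply (greedy_splice_rem_le d s m b l).
Qed.

Close Scope Q_scope.

Theorem theorem6 (d : Q) (hd1 : (1 < d)%Q)
  (hdnz : forall z : Z, ~ (d == inject_Z z)%Q) :
  exists (Sigma : Type) (A : DDSA Sigma) (r : Q),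
    Finite Sigma /\ ~ omega_regular (cut_lang A d r).
Proof.
  destruct (noninteger_lowest_terms d hdnz) as (p & q & Hdq & Hcop & Hq).
  set (s := (1 # q)%Q).
  assert (Hs : (s * inject_Z (Zpos q) == 1)%Q) by (unfold s, Qeq; simpl; lia).
  assert (Hsd : (0 <= s < d)%Q).
  { split; [unfold s, Qle; simpl; lia|].
    apply Qle_lt_trans with 1%Q; [unfold s, Qle; simpl; lia | exact hd1]. }
  destruct (greedy_word_exists d s hd1 Hsd) as (M & w & Hw).
  destruct (digit_dsa_greedy M w d s hd1 Hsd Hw) as [Hwin Hsplice].
  exists (Fin.t M), (digit_dsa M), s. split; [apply Fin_Finite|].
  intros (Qs & init & delta & acc & HQ & Hiff).
  destruct (proj1 (Hiff w) Hwin) as (rho & Hinit & Hdelta & Hacc).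
  destruct (finite_repeat _ (fun i => rho (S i)) HQ) as (j & k & Hjk & Hloop).
  simpl in Hloop.
  assert (Hdel := Hsplice j (S k)
    (proj2 (Hiff _) (buchi_accepts_splice _ _ _ _ _ _ _ _ _ Hloop Hinit Hdelta Hacc))).
  assert (Hpump := Hsplice k (S j)
    (proj2 (Hiff _) (buchi_accepts_splice _ _ _ _ _ _ _ _ _ (eq_sym Hloop) Hinit Hdelta Hacc))).
  apply (greedy_rem_injective d s p (Zpos q) Hdq Hcop Hs Hq (S j) (S k)); [lia|].
  apply eqR_Qeq. lra.
Qed.
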